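(* Let $n,m$ be positive integers. Let $\boldsymbol\alpha,\boldsymbol\beta\in\mathbb{R}^m_{\geq 0}$ with $\sum_i\alpha_i=\sum_j\beta_j=1/n$, and let $\mathbf C_0,\dots,\mathbf C_{n-1}\in\mathbb{R}^{m\times m}_{\geq 0}$, writing $C_{ijk}$ for the $(i,j)$-entry of $\mathbf C_k$. Consider the problem $$\text{(P)}\quad \min_{\mathbf T_0,\dots,\mathbf T_{n-1}\in\mathbb{R}^{m\times m}_{\geq 0}}\ \sum_{k=0}^{n-1}\langle \mathbf C_k,\mathbf T_k\rangle\quad\text{s.t.}\quad \sum_{k=0}^{n-1}\mathbf T_k\mathbf 1_m=\boldsymbol\alpha,\ \ \sum_{k=0}^{n-1}\mathbf T_k^\top\mathbf 1_m=\boldsymbol\beta,$$ and the small problem $$\text{(S)}\quad \min_{\mathbf S\in\mathbb{R}^{m\times m}_{\geq 0}}\ \langle\mathbf G,\mathbf S\rangle\quad\text{s.t.}\quad \mathbf S\mathbf 1_m=\boldsymbol\alpha,\ \ \mathbf S^\top\mathbf 1_m=\boldsymbol\beta,$$ where $G_{ij}:=\min_{0\le k\le n-1}C_{ijk}$. Let $\mathbf S^*$ be an optimal solution of (S). Define $\mathbf T^*_0,\dots,\mathbf T^*_{n-1}$ by $T^*_{ijk}=S^*_{ij}$ if $k=\min\big(\operatorname{argmin}_{0\le k'\le n-1}C_{ijk'}\big)$ and $T^*_{ijk}=0$ otherwise, where $T^*_{ijk}$ denotes the $(i,j)$-entry of $\mathbf T^*_k$. Then $(\mathbf T^*_k)_{k=0,\dots,n-1}$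 is an optimal solution of (P), and the optimal objective value of (P) equals that of (S).
   Context: $\langle\mathbf X,\mathbf Y\rangle=\sum_{i,j}X_{ij}Y_{ij}$ is the Frobenius inner product and $\mathbf 1_m$ is the all-ones vector in $\mathbb{R}^m$. $\operatorname{argmin}_{k'}C_{ijk'}$ is the set of indices attaining the minimum, and the smallest such index is taken. *)

From mathcomp Require Import all_boot all_order all_algebra.
Set Implicit Arguments. Unset Strict Implicit. Unset Printing Implicit Defensive.
Import Order.TTheory GRing.Theory Num.Theory.
Local Open Scope ring_scope.

Section Defs.
Variable R : realFieldType.

Definition frob (m : nat) (X Y : 'M[R]_m) : R :=
  \sum_(i < m) \sum_(j < m) X i j * Y i j.

Definition nonneg_mx (m : nat) (X : 'M[R]_m) : Prop := forall i j, 0 <= X i j.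

Definition ones (m : nat) : 'cV[R]_m := const_mx 1.

Definition feasP (n m : nat) (alpha beta : 'cV[R]_m) (T : 'I_n -> 'M[R]_m) : Prop :=
  (forall k, nonneg_mx (T k)) /\
  \sum_(k < n) (T k *m ones m) = alpha /\
  \sum_(k < n) ((T k)^T *m ones m) = beta.

Definition objP (n m : nat) (C T : 'I_n -> 'M[R]_m) : R :=
  \sum_(k < n) frob (C k) (T k).

Definition optimalP (n m : nat) (alpha beta : 'cV[R]_m) (C T : 'I_n -> 'M[R]_m) : Prop :=
  feasP alpha beta T /\
  forall T', feasP alpha beta T' -> objP C T <= objP C T'.

Definition feasS (m : nat) (alpha beta : 'cV[R]_m) (S : 'M[R]_m) : Prop :=
  nonneg_mx S /\ S *m ones m = alpha /\ S^T *m ones m = beta.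

Definition optimalS (m : nat) (alpha beta : 'cV[R]_m) (G S : 'M[R]_m) : Prop :=
  feasS alpha beta S /\
  forall S', feasS alpha beta S' -> frob G S <= frob G S'.

(* G_ij = min_{0<=k<=n-1} C_ijk  (n > 0; the seed C_{ij0} does not change the min) *)
Definition Gmin (n m : nat) (hn : (0 < n)%N) (C : 'I_n -> 'M[R]_m) : 'M[R]_m :=
  \matrix_(i, j) \big[Num.min/C (Ordinal hn) i j]_(k < n) C k i j.

Definition is_argmin (n m : nat) (C : 'I_n -> 'M[R]_m) (i j : 'I_m) (k : 'I_n) : Prop :=
  forall k' : 'I_n, C k i j <= C k' i j.

Definition is_min_argmin (n m : nat) (C : 'I_n -> 'M[R]_m) (i j : 'I_m) (k : 'I_n) : Prop :=
  is_argmin C i j k /\ forall k' : 'I_n, (k' < k)%N -> ~ is_argmin C i j k'.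

End Defs.

From mathcomp Require Import all_boot all_order all_algebra.
Set Implicit Arguments. Unset Strict Implicit. Unset Printing Implicit Defensive.
Import Order.TTheory GRing.Theory Num.Theory.
Local Open Scope ring_scope.

(* Summing the plans T_k of a feasible point of (P) gives a feasible point of
   (S), and since G <= C_k entrywise its cost <G, sum_k T_k> is at most the
   cost of (P); so the optimum of (P) is at least that of (S).  Conversely,
   T* puts all of S*_ij on an index k minimising C_ijk, hence sums to S* and
   costs exactly <G, S*>. *)

Section Relaxation.
Variables (R : realFieldType) (n m : nat) (C : 'I_n -> 'M[R]_m).

Lemma objP_entrywise (T : 'I_n -> 'M[R]_m) :
  objP C T = \sum_i \sum_j \sum_(k < n) C k i j * T k i j.
Proof.
by rewrite /objP /frob exchange_big; apply: eq_bigr => i _; rewrite exchange_big.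
Qed.

Lemma feasP_sumE (alpha beta : 'cV[R]_m) (T : 'I_n -> 'M[R]_m) :
  feasP alpha beta T <->
  [/\ forall k, nonneg_mx (T k),
      (\sum_k T k) *m ones R m = alpha & (\sum_k T k)^T *m ones R m = beta].
Proof.
rewrite /feasP mulmx_suml raddf_sum mulmx_suml.
by split=> [[? [? ?]] | [? ? ?]].
Qed.

Lemma feasS_sum (alpha beta : 'cV[R]_m) (T : 'I_n -> 'M[R]_m) :
  feasP alpha beta T -> feasS alpha beta (\sum_k T k).
Proof.
move/feasP_sumE=> [T_ge0 Ta Tb]; split=> // i j.
by rewrite summxE; apply: sumr_ge0 => k _; apply: T_ge0.
Qed.

Section MinimalCost.
Variable (hn : (0 < n)%N).

Local Notation G := (Gmin hn C).

Lemma Gmin_le (k : 'I_n) (i j : 'I_m) : G i j <= C k i j.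
Proof. by rewrite mxE (bigD1 k) //= ge_min lexx. Qed.

Lemma Gmin_argmin {k : 'I_n} {i j : 'I_m} : is_argmin C i j k -> G i j = C k i j.
Proof.
move=> k_min; apply/le_anti; rewrite Gmin_le /= mxE.
by apply: (big_ind (>= C k i j)) => // a b; rewrite le_min => -> ->.
Qed.

Lemma exists_min_argmin (i j : 'I_m) : exists k, is_min_argmin C i j k.
Proof.
pose argminb k := [forall k', C k i j <= C k' i j].
have argminbP k : reflect (is_argmin C i j k) (argminb k).
  exact: (iffP forallP).
have [k0 _ k0_min] := arg_minP (fun k => C k i j) (isT : predT (Ordinal hn)).
have /argminbP k0_argmin : is_argmin C i j k0 by move=> k; apply: k0_min.
have [k /argminbP k_argmin k_first] := arg_minnP val k0_argmin.
exists k; split=> // k' lt_k'k /argminbP/k_first.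
by rewrite leqNgt lt_k'k.
Qed.

Lemma min_argmin_uniq (i j : 'I_m) (k k' : 'I_n) :
  is_min_argmin C i j k -> is_min_argmin C i j k' -> k = k'.
Proof.
move=> [k_argmin k_first] [k'_argmin k'_first]; apply/val_inj.
by case: (ltngtP k k') => // [/k'_first | /k_first].
Qed.

Lemma objP_ge_Gmin (T : 'I_n -> 'M[R]_m) :
  (forall k, nonneg_mx (T k)) -> frob G (\sum_k T k) <= objP C T.
Proof.
move=> T_ge0; rewrite objP_entrywise /frob.
apply: ler_sum => i _; apply: ler_sum => j _.
rewrite summxE mulr_sumr; apply: ler_sum => k _.
by apply: ler_wpM2r; [apply: T_ge0 | apply: Gmin_le].
Qed.

Section Selection.
Variables (S : 'M[R]_m) (T : 'I_n -> 'M[R]_m).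
Hypothesis hT : forall k i j,
  (is_min_argmin C i j k -> T k i j = S i j) /\
  (~ is_min_argmin C i j k -> T k i j = 0).

Lemma selection_entry (i j : 'I_m) :
  exists2 k0, is_argmin C i j k0 &
    forall k, T k i j = if k == k0 then S i j else 0.
Proof.
have [k0 k0_min] := exists_min_argmin i j.
exists k0 => [|k]; first by case: k0_min.
case: eqP => [-> | ne_kk0]; first exact: (hT k0 i j).1.
by apply: (hT k i j).2 => /min_argmin_uniq/(_ k0_min).
Qed.

Lemma sum_selection_entry (F : 'I_n -> R) {i j : 'I_m} {k0 : 'I_n} :
  (forall k, T k i j = if k == k0 then S i j else 0) ->
  \sum_k F k * T k i j = F k0 * S i j.
Proof.
move=> Tij; rewrite (bigD1 k0) //= Tij eqxx big1 ?addr0 // => k /negbTE ne_kk0.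
by rewrite Tij ne_kk0 mulr0.
Qed.

Lemma sum_selection : \sum_k T k = S.
Proof.
apply/matrixP=> i j; rewrite summxE; have [k0 _ Tij] := selection_entry i j.
rewrite -[RHS]mul1r -(sum_selection_entry (fun=> 1) Tij).
by apply: eq_bigr => k _; rewrite mul1r.
Qed.

Lemma objP_selection : objP C T = frob G S.
Proof.
rewrite objP_entrywise; apply: eq_bigr => i _; apply: eq_bigr => j _.
have [k0 k0_argmin Tij] := selection_entry i j.
by rewrite (sum_selection_entry _ Tij) (Gmin_argmin k0_argmin).
Qed.

Lemma selection_ge0 : nonneg_mx S -> forall k, nonneg_mx (T k).
Proof.
move=> S_ge0 k i j; have [k0 _ Tij] := selection_entry i j.
by rewrite Tij; case: eqP.
Qed.

End Selection.
End MinimalCost.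
End Relaxation.

Theorem theorem1 (R : realFieldType) (n m : nat) (hn : (0 < n)%N) (hm : (0 < m)%N)
    (alpha beta : 'cV[R]_m)
    (halpha : forall i, 0 <= alpha i 0) (hbeta : forall j, 0 <= beta j 0)
    (hsa : \sum_(i < m) alpha i 0 = (n%:R)^-1)
    (hsb : \sum_(j < m) beta j 0 = (n%:R)^-1)
    (C : 'I_n -> 'M[R]_m) (hC : forall k, nonneg_mx (C k))
    (Sstar : 'M[R]_m) (hS : optimalS alpha beta (Gmin hn C) Sstar)
    (Tstar : 'I_n -> 'M[R]_m)
    (hT : forall k i j,
        (is_min_argmin C i j k -> Tstar k i j = Sstar i j) /\
        (~ is_min_argmin C i j k -> Tstar k i j = 0)) :
  optimalP alpha beta C Tstar /\ objP C Tstar = frob (Gmin hn C) Sstar.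
Proof.
have [[S_ge0 [Sa Sb]] S_opt] := hS.
have feasT : feasP alpha beta Tstar.
  apply/feasP_sumE; rewrite (sum_selection hn hT).
  by split=> //; exact: (selection_ge0 hn hT S_ge0).
have objT := objP_selection hn hT.
split=> //; split=> // T' feasT'; rewrite objT.
apply: le_trans (S_opt _ (feasS_sum feasT')) (objP_ge_Gmin C hn _).
by case: feasT'.
Qed.
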